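(* Let $g(z)=z^3-z^2+7z+1$, $s_1=0.275$, $s_2=2.75$, $\mathbb{C}_L=\{z:\Re z\le0\}$, $\mathbb{C}_R=\{z:\Re z>0\}$, and let $D(z_0,r)$ denote the open disc of radius $r$ centered at $z_0$. Then: (1) For all $z_0\in\mathbb{C}$ with $|z_0|=1$ and sufficiently small $\varepsilon>0$, $g(z)-z_0$ has exactly one root in $D_1=(\mathbb{C}_L\cap D(0,s_1))\cup D(0,\varepsilon)$. (2) For all $z_0\in\mathbb{C}$ with $|z_0|=1$ and sufficiently small $\varepsilon>0$, $g(z)-z_0$ has exactly two roots in $D_2=(\mathbb{C}_R\cap D(0,s_2))\setminus D(0,\varepsilon)$. (3) For all $z_0\in\mathbb{C}$ with $|z_0|=1$, $g(z)-z_0$ has no roots in $D_3=\mathbb{C}_L\setminus D(0,s_1)$. (4) For all $z_0\in\mathbb{C}$ with $|z_0|=1$, $g(z)-z_0$ has no roots in $D_4=\mathbb{C}_R\setminus D(0,s_2)$. *)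

From HB Require Import structures.
From mathcomp Require Import all_boot all_order all_algebra.
From mathcomp Require Import reals.
From mathcomp.real_closed Require Import complex.
Set Implicit Arguments. Unset Strict Implicit. Unset Printing Implicit Defensive.
Import Order.TTheory GRing.Theory Num.Theory.
Local Open Scope ring_scope.

Definition gpoly (R : realType) : {poly R[i]} :=
  'X^3 - 'X^2 + (7%:R)%:P * 'X + 1.

Definition s1 (R : realType) : R := 11%:R / 40%:R.
Definition s2 (R : realType) : R := 11%:R / 4%:R.

Definition CL (R : realType) : pred R[i] := fun z => complex.Re z <= 0.
Definition CR (R : realType) : pred R[i] := fun z => 0 < complex.Re z.
Definition disc0 (R : realType) (r : R) : pred R[i] := fun z => `|z| < (r%:C)%C.

Definition D1 (R : realType) (eps : R) : pred R[i] :=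
  fun z => (CL z && disc0 (s1 R) z) || disc0 eps z.
Definition D2 (R : realType) (eps : R) : pred R[i] :=
  fun z => (CR z && disc0 (s2 R) z) && ~~ disc0 eps z.
Definition D3 (R : realType) : pred R[i] := fun z => CL z && ~~ disc0 (s1 R) z.
Definition D4 (R : realType) : pred R[i] := fun z => CR z && ~~ disc0 (s2 R) z.

(* The (monic) polynomial p has exactly k roots in D, counted with
   multiplicity: p splits as prod (X - x) over the multiset s of its roots
   and exactly k elements of s lie in D. (The multiset s is unique.) *)
Definition nroots_in (R : realType) (D : pred R[i]) (p : {poly R[i]}) (k : nat) :=
  exists s : seq R[i], p = \prod_(x <- s) ('X - x%:P) /\ count D s = k.

From HB Require Import structures.
From mathcomp Require Import all_boot all_order all_algebra.
From mathcomp Require Import reals.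
From mathcomp.real_closed Require Import complex.
From mathcomp Require Import ring lra.
Import Order.TTheory GRing.Theory Num.Theory.
Local Open Scope ring_scope.

(* Write z = x + iy.  A root of g - z0 with |z0| = 1 satisfies |g(z)|^2 - 1 = 0,
   and |g(x + iy)|^2 - 1 is a cubic polynomial in x and x^2 + y^2.  Elementary
   estimates show that it is positive when x <= 0 and |z| >= s1, and when
   x >= 0 and |z| >= s2; moreover Re g(z) > 1 when x > 0 and |z|^2 <= 8/5.  So
   the roots in C_L lie in D(0, s1) and those in C_R in the annulus
   8/5 < |z|^2 < s2^2.  The roots a, b, c satisfy a + b + c = 1,
   ab + bc + ca = 7 and abc = z0 - 1.  The first two give
   a + b - a^2 - ab - b^2 = 7 for each pair, which is impossible for two points
   of D(0, s1), and |abc| <= 2 < (8/5)^(3/2) puts some root in D(0, sqrt(8/5)),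
   hence in C_L.  So exactly one root lies in C_L, and for eps < s1 the sets D1
   and D2 pick out exactly the roots in C_L and in C_R. *)

Section RealEstimates.
Context {R : realFieldType}.
Implicit Types x y t r rr : R.

Definition gRe x y := x ^+ 3 - 3 * x * y ^+ 2 - x ^+ 2 + y ^+ 2 + 7 * x + 1.
Definition gIm x y := 3 * x ^+ 2 * y - y ^+ 3 - 2 * x * y + 7 * y.

Definition gnorm2_sub1 x rr :=
  8 * x ^+ 3 + (28 * rr - 4) * x ^+ 2 + (14 - 20 * rr - 2 * rr ^+ 2) * x
  + rr ^+ 3 - 13 * rr ^+ 2 + 51 * rr.

Lemma gnorm2_sub1E x y :
  gRe x y ^+ 2 + gIm x y ^+ 2 - 1 = gnorm2_sub1 x (x ^+ 2 + y ^+ 2).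
Proof. rewrite /gRe /gIm /gnorm2_sub1; ring. Qed.

Lemma gnorm2_sub1_neg_small t r :
  0 <= t -> t <= r -> 11 / 40 <= r -> r <= 1 / 2 -> 0 < gnorm2_sub1 (- t) (r ^+ 2).
Proof.
move=> t_ge0 t_le_r r_ge r_le.
(* At t = r, i.e. z = -r, the value is (g(-r) - 1)(g(-r) + 1); s1 lies just
   beyond the positive root of r^3 + r^2 + 7r - 2. *)
have -> : gnorm2_sub1 (- t) (r ^+ 2) =
    r * (r ^+ 2 + r + 7) * (r ^+ 3 + r ^+ 2 + 7 * r - 2)
    + (r - t) * (8 * (t ^+ 2 + t * r + r ^+ 2) - (28 * r ^+ 2 - 4) * (t + r)
                 + 14 - 20 * r ^+ 2 - 2 * r ^+ 4).
  by rewrite /gnorm2_sub1; ring.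
have cubic_gt0 : 0 < r ^+ 3 + r ^+ 2 + 7 * r - 2.
  have r2_ge : (11 / 40) ^+ 2 <= r ^+ 2 by nra.
  have r3_ge : (11 / 40) ^+ 3 <= r ^+ 3 by rewrite !exprS expr0 !mulr1; nra.
  nra.
have slope_ge0 : 0 <= 8 * (t ^+ 2 + t * r + r ^+ 2) - (28 * r ^+ 2 - 4) * (t + r)
                      + 14 - 20 * r ^+ 2 - 2 * r ^+ 4.
  have r2_le : r ^+ 2 <= 1 / 4 by nra.
  have r2t_le : r ^+ 2 * t <= r ^+ 3 by rewrite exprS; nra.
  have r3_le : r ^+ 3 <= 1 / 8 by rewrite exprS; nra.
  have r4_le : r ^+ 4 <= 1 / 16 by rewrite (exprS _ 3); nra.
  nra.
apply: ltr_wpDr; first by apply: mulr_ge0; [lra | exact: slope_ge0].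
by apply: mulr_gt0 => //; apply: mulr_gt0; [lra | nra].
Qed.

Lemma gnorm2_sub1_neg_mid t r : 0 <= t -> t <= r -> 1 / 2 <= r -> r <= 1 ->
  0 < gnorm2_sub1 (- t) (r ^+ 2).
Proof.
move=> t_ge0 t_le_r r_ge r_le.
have t3_le : t ^+ 3 <= r ^+ 3.
  rewrite -subr_ge0.
  have -> : r ^+ 3 - t ^+ 3 = (r - t) * (r ^+ 2 + r * t + t ^+ 2) by ring.
  by apply: mulr_ge0; nra.
have t2_le : t ^+ 2 <= r ^+ 2 by nra.
have lower :
    r * (r ^+ 5 - 13 * r ^+ 3 - 8 * r ^+ 2 + 47 * r - 14) <= gnorm2_sub1 (- t) (r ^+ 2).
  have := mulr_ge0 (mulr_ge0 (ler0n _ 28) (sqr_ge0 r)) (sqr_ge0 t).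
  have : 0 <= (20 * r ^+ 2 + 2 * r ^+ 4) * t by apply: mulr_ge0; nra.
  rewrite /gnorm2_sub1; nra.
apply: lt_le_trans lower; apply: mulr_gt0; first lra.
have r5_ge0 : 0 <= r ^+ 5 by apply: exprn_ge0; lra.
have r3_le : r ^+ 3 <= r ^+ 2 by rewrite exprS; nra.
have r2_le : r ^+ 2 <= r by nra.
nra.
Qed.

Lemma gnorm2_sub1_neg_large t r :
  0 <= t -> t <= r -> 1 <= r -> 0 < gnorm2_sub1 (- t) (r ^+ 2).
Proof.
move=> t_ge0 t_le_r r_ge.
have -> : gnorm2_sub1 (- t) (r ^+ 2) =
    (8 * (r ^+ 2 - t) * t ^+ 2 + (20 * r ^+ 2 - 4) * t ^+ 2
     + (20 * r ^+ 2 + 2 * r ^+ 4 - 14) * t)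
    + r ^+ 2 * ((r ^+ 2 - 13 / 2) ^+ 2 + 35 / 4).
  by rewrite /gnorm2_sub1; field.
have r2_ge : 1 <= r ^+ 2 by nra.
have t_le_r2 : t <= r ^+ 2 by nra.
apply: ltr_wpDl.
  rewrite !addr_ge0 //; apply: mulr_ge0; rewrite ?sqr_ge0 //; nra.
by apply: mulr_gt0; [lra | apply: ltr_wpDl; [exact: sqr_ge0 | lra]].
Qed.

Lemma gnorm2_sub1_nonneg_far x rr :
  0 <= x -> (11 / 4) ^+ 2 <= rr -> 0 < gnorm2_sub1 x rr.
Proof.
move=> x_ge0 rr_ge; set r0 : R := (11 / 4) ^+ 2.
have [s s_ge0 ->] : exists2 s, 0 <= s & rr = r0 + s.
  by exists (rr - r0); rewrite ?subr_ge0 // addrC subrK.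
have -> : gnorm2_sub1 x (r0 + s) = gnorm2_sub1 x r0 + s * (28 * x ^+ 2 - 20 * x + 51
    - (2 * x + 13) * (r0 + s + r0) + (r0 + s) ^+ 2 + (r0 + s) * r0 + r0 ^+ 2).
  by rewrite /gnorm2_sub1; ring.
apply: ltr_wpDr.
  apply: mulr_ge0 => //; rewrite /r0.
  have := sqr_ge0 (s - x); have := sqr_ge0 (x - 201 / 216); nra.
rewrite /gnorm2_sub1 /r0.
(* 293/500 is close to the minimiser of x |-> gnorm2_sub1 x r0 on x >= 0. *)
have := sqr_ge0 (x - 293 / 500); have := mulr_ge0 (sqr_ge0 (x - 293 / 500)) x_ge0.
nra.
Qed.

Lemma gRe_gt1 x y : 0 < x -> x ^+ 2 + y ^+ 2 <= 8 / 5 -> 1 < gRe x y.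
Proof.
move=> x_gt0 r2_le.
have -> : gRe x y = 1 + (x * (7 - x + x ^+ 2 - 3 * y ^+ 2) + y ^+ 2).
  by rewrite /gRe; ring.
rewrite ltrDl; nra.
Qed.

Lemma prod3_le4_factor_le x y z : 0 <= x -> 0 <= y -> 0 <= z -> x * y * z <= 4 ->
  [|| x <= 8 / 5, y <= 8 / 5 | z <= 8 / 5].
Proof.
move=> x_ge0 y_ge0 z_ge0 xyz_le.
apply/negPn/negP; rewrite !negb_or -!ltNge => /and3P [x_gt y_gt z_gt].
have xy_gt : 64 / 25 < x * y by nra.
nra.
Qed.

End RealEstimates.

Lemma gnorm2_sub1_nonpos_far {R : rcfType} (x y : R) :
  x <= 0 -> (11 / 40) ^+ 2 <= x ^+ 2 + y ^+ 2 -> 0 < gnorm2_sub1 x (x ^+ 2 + y ^+ 2).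
Proof.
move=> x_le0 r2_ge; set r := Num.sqrt (x ^+ 2 + y ^+ 2).
have r_ge0 : 0 <= r := sqrtr_ge0 _.
have r2E : r ^+ 2 = x ^+ 2 + y ^+ 2 by rewrite sqr_sqrtr // addr_ge0 ?sqr_ge0.
have r_ge : 11 / 40 <= r by rewrite -r2E in r2_ge; nra.
have negx_ge0 : 0 <= - x by lra.
have negx_le_r : - x <= r by have := sqr_ge0 y; nra.
rewrite -r2E -[x]opprK.
have [r_le|r_gt] := lerP r (1 / 2); first exact: gnorm2_sub1_neg_small.
have [r_le1|r_gt1] := lerP r 1; first by apply: gnorm2_sub1_neg_mid => //; lra.
by apply: gnorm2_sub1_neg_large => //; lra.
Qed.

Section Cubic.
Context {F : comNzRingType}.
Implicit Types a b c u v w : F.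

Lemma vieta_pair a b c : a + b + c = 1 -> a * b + b * c + c * a = 7 ->
  a + b - a ^+ 2 - a * b - b ^+ 2 = 7.
Proof.
move=> e1 <-; have -> : c = 1 - a - b by rewrite -e1; ring.
ring.
Qed.

Lemma prod3_XsubC a b c :
  \prod_(x <- [:: a; b; c]) ('X - x%:P) =
  'X^3 - (a + b + c) *: 'X^2 + (a * b + b * c + c * a) *: 'X - (a * b * c)%:P.
Proof. rewrite !big_cons big_nil -!mul_polyC !polyCD !polyCM; ring. Qed.

Lemma vieta3 a b c u v w :
  \prod_(x <- [:: a; b; c]) ('X - x%:P) = 'X^3 - u *: 'X^2 + v *: 'X - w%:P ->
  [/\ a + b + c = u, a * b + b * c + c * a = v & a * b * c = w].
Proof.
rewrite prod3_XsubC => E.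
have coefs i := congr1 (coefp i) E.
move: (coefs 2%N) (coefs 1%N) (coefs 0%N) => /=.
rewrite !coefE /= !(mulr0, mulr1, addr0, subr0, sub0r, oppr0, add0r).
by move=> /oppr_inj e2 e1 /oppr_inj e0.
Qed.

End Cubic.

Lemma cubic_split {K : closedFieldType} (u v w : K) : exists a b c : K,
  'X^3 - u *: 'X^2 + v *: 'X - w%:P = \prod_(x <- [:: a; b; c]) ('X - x%:P).
Proof.
set q : {poly K} := - u *: 'X^2 + v *: 'X - w%:P.
have size_q : (size q < 4)%N.
  apply: leq_ltn_trans (size_polyD _ _) _.
  rewrite gtn_max size_polyN (leq_ltn_trans (size_polyC_leq1 _)) // andbT.
  apply: leq_ltn_trans (size_polyD _ _) _.
  by rewrite gtn_max !(leq_ltn_trans (size_scale_leq _ _)) ?size_polyXn ?size_polyX.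
have -> : 'X^3 - u *: 'X^2 + v *: 'X - w%:P = 'X^3 + q by rewrite /q scaleNr !addrA.
have monic_p : 'X^3 + q \is monic.
  by rewrite monicE lead_coefDl ?lead_coefXn // size_polyXn.
have [s Ds] := closed_field_poly_normal ('X^3 + q).
rewrite (monicP monic_p) scale1r in Ds.
have size_s : size s = 3.
  by apply: succn_inj; rewrite -(size_prod_XsubC s id) -Ds size_polyDl ?size_polyXn.
by case: s Ds size_s => [|a [|b [|c []]]] // Ds _; exists a, b, c.
Qed.

Lemma count3_eq1 (T : Type) (P : pred T) (a b c : T) : [|| P a, P b | P c] ->
  ~~ (P a && P b) -> ~~ (P a && P c) -> ~~ (P b && P c) -> count P [:: a; b; c] = 1%N.
Proof. by rewrite /=; case: (P a); case: (P b); case: (P c). Qed.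

Section RootLocation.
Context {R : realType}.
Implicit Types (z w a b c u v : R[i]).

Definition normc2 z : R := complex.Re z ^+ 2 + complex.Im z ^+ 2.

Lemma normc2_ge0 z : 0 <= normc2 z.
Proof. by rewrite addr_ge0 ?sqr_ge0. Qed.

Lemma normc2_unit z : `|z| = 1 -> normc2 z = 1.
Proof. by move=> z1; apply: complexI; rewrite add_Re2_Im2 z1 expr1n. Qed.

Lemma normc2M a b : normc2 (a * b) = normc2 a * normc2 b.
Proof. by apply: complexI; rewrite rmorphM /= !add_Re2_Im2 normrM exprMn. Qed.

Lemma disc0E r z : 0 < r -> disc0 r z = (normc2 z < r ^+ 2).
Proof.
move=> r_gt0; rewrite /disc0 normc_def ltcR -[X in _ < X](gtr0_norm r_gt0).
by rewrite -sqrtr_sqr ltr_sqrt ?exprn_gt0.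
Qed.

Lemma horner_gpoly z :
  (gpoly R).[z] =
    (gRe (complex.Re z) (complex.Im z) +i* gIm (complex.Re z) (complex.Im z))%C.
Proof.
case: z => x y; rewrite /gpoly !hornerE -(rmorph_nat (real_complex R) 7).
rewrite !exprS expr0 !mulr1; simpc.
by congr (_ +i* _)%C; rewrite /gRe /gIm /=; ring.
Qed.

Lemma root_gnorm2_eq1 z0 z : `|z0| = 1 -> root (gpoly R - z0%:P) z ->
  gRe (complex.Re z) (complex.Im z) ^+ 2 + gIm (complex.Re z) (complex.Im z) ^+ 2 = 1.
Proof.
move=> /normc2_unit z0_1.
rewrite rootE hornerD hornerN hornerC subr_eq0 horner_gpoly => /eqP gz.
by rewrite -z0_1 -gz.
Qed.

Lemma normc2_sub1_le4 w : `|w| = 1 -> normc2 (w - 1) <= 4.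
Proof.
move=> /normc2_unit; rewrite /normc2 !raddfB /= subr0 => w1.
have := sqr_ge0 (complex.Im w); nra.
Qed.

Lemma root_CL_small w z : `|w| = 1 -> root (gpoly R - w%:P) z ->
  CL z -> normc2 z < s1 R ^+ 2.
Proof.
move=> w1 gz zCL; rewrite ltNge; apply/negP => far.
have := gnorm2_sub1_nonpos_far _ _ zCL far.
by rewrite -gnorm2_sub1E (root_gnorm2_eq1 _ _ w1 gz) subrr ltxx.
Qed.

Lemma root_CR_bounded w z : `|w| = 1 -> root (gpoly R - w%:P) z ->
  0 <= complex.Re z -> normc2 z < s2 R ^+ 2.
Proof.
move=> w1 gz Rez_ge0; rewrite ltNge; apply/negP => far.
have := gnorm2_sub1_nonneg_far _ _ Rez_ge0 far.
by rewrite -gnorm2_sub1E (root_gnorm2_eq1 _ _ w1 gz) subrr ltxx.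
Qed.

Lemma root_CR_far w z : `|w| = 1 -> root (gpoly R - w%:P) z ->
  CR z -> 8 / 5 < normc2 z.
Proof.
move=> w1 gz zCR; rewrite ltNge; apply/negP => near.
have := gRe_gt1 _ _ zCR near; have := root_gnorm2_eq1 _ _ w1 gz.
set u := gRe _ _; set v := gIm _ _; have := sqr_ge0 v; nra.
Qed.

Lemma Re_pair_lt7 a b : normc2 a < s1 R ^+ 2 -> normc2 b < s1 R ^+ 2 ->
  complex.Re (a + b - a ^+ 2 - a * b - b ^+ 2) < 7.
Proof.
case: a => xa ya; case: b => xb yb; rewrite /normc2 /s1 /= => a_small b_small.
rewrite -!expr2.
have xa_lt : xa < 1 / 2 by nra.
have xb_lt : xb < 1 / 2 by nra.
have xaxb_ge : - (xa * xb) <= 1 / 4 by nra.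
have yayb_le : ya * yb <= 1 / 4 by nra.
nra.
Qed.

Lemma gpoly_subC_split w : exists a b c,
  gpoly R - w%:P = \prod_(x <- [:: a; b; c]) ('X - x%:P) /\
  [/\ a + b + c = 1, a * b + b * c + c * a = 7 & a * b * c = w - 1].
Proof.
have gE : gpoly R - w%:P = 'X^3 - 1 *: 'X^2 + 7 *: 'X - (w - 1)%:P.
  by rewrite /gpoly scale1r -mul_polyC polyCB polyC1; ring.
have [a [b [c abcE]]] := cubic_split 1 7 (w - 1).
by exists a, b, c; rewrite gE abcE; split; last exact: vieta3.
Qed.

Lemma count_CL_roots w a b c : `|w| = 1 ->
  gpoly R - w%:P = \prod_(x <- [:: a; b; c]) ('X - x%:P) ->
  a + b + c = 1 -> a * b + b * c + c * a = 7 -> a * b * c = w - 1 ->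
  count (@CL R) [:: a; b; c] = 1%N.
Proof.
move=> w1 gE e1 e2 e3.
have root_abc u : u \in [:: a; b; c] -> root (gpoly R - w%:P) u.
  by rewrite gE root_prod_XsubC.
have [ga gb gc] : [/\ root (gpoly R - w%:P) a, root (gpoly R - w%:P) b
                   & root (gpoly R - w%:P) c].
  by split; apply: root_abc; rewrite !inE eqxx ?orbT.
have near_CL u : root (gpoly R - w%:P) u -> normc2 u <= 8 / 5 -> CL u.
  move=> gu near; apply: contraLR near => notCL.
  by rewrite -ltNge (root_CR_far _ _ w1 gu) // /CR ltNge.
have not_both_CL u v : root (gpoly R - w%:P) u -> root (gpoly R - w%:P) v ->
    u + v - u ^+ 2 - u * v - v ^+ 2 = 7 -> ~~ (CL u && CL v).
  move=> gu gv uv7; apply/negP => /andP [uCL vCL].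
  have := Re_pair_lt7 _ _ (root_CL_small _ _ w1 gu uCL) (root_CL_small _ _ w1 gv vCL).
  by rewrite uv7 -(rmorph_nat (real_complex R)) ltxx.
apply: count3_eq1.
- have abc_le4 : normc2 a * normc2 b * normc2 c <= 4.
    by rewrite -!normc2M e3 normc2_sub1_le4.
  have := prod3_le4_factor_le _ _ _ (normc2_ge0 a) (normc2_ge0 b) (normc2_ge0 c) abc_le4.
  case/or3P => near.
  + by rewrite near_CL.
  + by rewrite (near_CL b) ?orbT.
  + by rewrite (near_CL c) ?orbT.
- exact: not_both_CL _ _ ga gb (vieta_pair _ _ _ e1 e2).
- by apply: not_both_CL _ _ ga gc (vieta_pair a c b _ _); [rewrite -e1 | rewrite -e2]; ring.
- by apply: not_both_CL _ _ gb gc (vieta_pair b c a _ _); [rewrite -e1 | rewrite -e2]; ring.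
Qed.

Lemma s1_gt0 : 0 < s1 R. Proof. by rewrite /s1; lra. Qed.

Lemma s2_gt0 : 0 < s2 R. Proof. by rewrite /s2; lra. Qed.

Section SmallRadius.
Variables (eps : R) (w : R[i]).
Hypotheses (eps_gt0 : 0 < eps) (eps_lt : eps < s1 R) (w1 : `|w| = 1).

Lemma root_CR_outside_eps z : root (gpoly R - w%:P) z -> CR z -> ~~ disc0 eps z.
Proof.
move=> gz zCR; rewrite disc0E // -leNgt.
have := root_CR_far _ _ w1 gz zCR; move: (eps_gt0) (eps_lt); rewrite /s1; nra.
Qed.

Lemma D1_root z : root (gpoly R - w%:P) z -> D1 eps z = CL z.
Proof.
move=> gz; rewrite /D1; have [zCL|zCR] := boolP (CL z).
  by rewrite disc0E ?s1_gt0 // (root_CL_small _ _ w1 gz zCL).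
by rewrite (negbTE (root_CR_outside_eps _ gz _)) // /CR ltNge.
Qed.

Lemma D2_root z : root (gpoly R - w%:P) z -> D2 eps z = ~~ CL z.
Proof.
move=> gz; rewrite /D2; have [zCL|zCL] := boolP (CL z).
  by move: zCL; rewrite /CR /CL ltNge => ->.
have zCR : CR z by rewrite /CR ltNge.
rewrite zCR disc0E ?s2_gt0 // (root_CR_bounded _ _ w1 gz (ltW zCR)).
by rewrite (root_CR_outside_eps _ gz zCR).
Qed.

Lemma nroots_D1_D2 :
  nroots_in (D1 eps) (gpoly R - w%:P) 1 /\ nroots_in (D2 eps) (gpoly R - w%:P) 2.
Proof.
have [a [b [c [gE [e1 e2 e3]]]]] := gpoly_subC_split w.
have nCL := count_CL_roots _ _ _ _ w1 gE e1 e2 e3.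
have roots u : u \in [:: a; b; c] -> root (gpoly R - w%:P) u.
  by rewrite gE root_prod_XsubC.
split; exists [:: a; b; c]; split => //.
  by rewrite -nCL; apply: eq_in_count => u /roots /D1_root.
have := count_predC (@CL R) [:: a; b; c]; rewrite nCL => /addnI <-.
by apply: eq_in_count => u /roots /D2_root.
Qed.

End SmallRadius.

End RootLocation.

Theorem lemma3p5 (R : realType) :
  (forall z0 : R[i], `|z0| = 1 ->
     exists e0 : R, 0 < e0 /\ forall eps : R, 0 < eps -> eps < e0 ->
       nroots_in (D1 eps) (gpoly R - z0%:P) 1) /\
  (forall z0 : R[i], `|z0| = 1 ->
     exists e0 : R, 0 < e0 /\ forall eps : R, 0 < eps -> eps < e0 ->
       nroots_in (D2 eps) (gpoly R - z0%:P) 2) /\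
  (forall z0 : R[i], `|z0| = 1 ->
     forall z : R[i], D3 z -> ~~ root (gpoly R - z0%:P) z) /\
  (forall z0 : R[i], `|z0| = 1 ->
     forall z : R[i], D4 z -> ~~ root (gpoly R - z0%:P) z).
Proof.
split; [|split; [|split]].
- move=> z0 z0_1; exists (s1 R); split=> [|eps eps_gt0 eps_lt]; first exact: s1_gt0.
  by case: (nroots_D1_D2 _ _ eps_gt0 eps_lt z0_1).
- move=> z0 z0_1; exists (s1 R); split=> [|eps eps_gt0 eps_lt]; first exact: s1_gt0.
  by case: (nroots_D1_D2 _ _ eps_gt0 eps_lt z0_1).
- move=> z0 z0_1 z /andP [zCL far]; apply: contraNN far => gz.
  by rewrite disc0E ?s1_gt0 // (root_CL_small _ _ z0_1 gz).
- move=> z0 z0_1 z /andP [zCR far]; apply: contraNN far => gz.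
  by rewrite disc0E ?s2_gt0 // (root_CR_bounded _ _ z0_1 gz) // ltW.
Qed.
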